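(* Let $\Pi$ be a $2$-dimensional toral sub-manifold confined to a rational plane, parametrised as $\Pi=\{u\xi+v\eta:(u,v)\in[0,A]\times[0,B]\}$ with $\xi,\eta$ as specified in the context. Then $$\mathcal{G}=\sum_{\substack{\lambda,\lambda'\in\Lambda_m\\ \lambda\neq\lambda'}}\left|\int_0^A\int_0^B e^{2\pi i\langle\lambda-\lambda',u\xi+v\eta\rangle}du\,dv\right|^2\ll_\Pi N\cdot\kappa(\sqrt m).$$
   Context: For a positive integer $m$ let $\Lambda_m=\{\lambda\in\mathbb{Z}^3:\|\lambda\|^2=m\}$ and $N=|\Lambda_m|$; $m$ ranges over integers with $m\not\equiv 0,4,7\pmod 8$ and bounds refer to $m\to\infty$. Let $\vec n=(n_1,n_2,n_3)$ be the unit normal to the plane containing $\Pi\subset\mathbb{R}^3/\mathbb{Z}^3$, with coordinates labelled so that $n_1\ne0$; the plane is rational if $n_2/n_1,n_3/n_1\in\mathbb{Q}$. Here $\xi=\frac{(n_2,-n_1,0)}{\sqrt{n_1^2+n_2^2}}$, $\eta=\frac{(n_1n_3,n_2n_3,-n_1^2-n_2^2)}{\sqrt{n_1^2+n_2^2}}$, and $A=\max\{u:u\xi+v\eta\in\Pi\}$, $B=\max\{v:u\xi+v\eta\in\Pi\}$. For $R>0$, $\kappa(R)$ is the maximal number of points of $\mathbb{Z}^3$ in the intersection of the sphere of radius $R$ centred at the origin with any plane. *)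

From Stdlib Require Import Reals Lra Lia ZArith QArith List.
From Stdlib Require Import ClassicalEpsilon.
From Coquelicot Require Import Coquelicot.
Import ListNotations.
Open Scope R_scope.

Definition R3 : Type := (R * R * R)%type.
Definition dot (x y : R3) : R :=
  let '(x1, x2, x3) := x in let '(y1, y2, y3) := y in x1 * y1 + x2 * y2 + x3 * y3.
Definition vadd (x y : R3) : R3 :=
  let '(x1, x2, x3) := x in let '(y1, y2, y3) := y in (x1 + y1, x2 + y2, x3 + y3).
Definition vscale (c : R) (x : R3) : R3 :=
  let '(x1, x2, x3) := x in (c * x1, c * x2, c * x3).

Definition Z3 : Type := (Z * Z * Z)%type.
Definition Z3toR3 (p : Z3) : R3 :=
  let '(a, b, c) := p in (IZR a, IZR b, IZR c).
Definition Z3_eq_dec (p q : Z3) : {p = q} + {p <> q}.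
Proof. decide equality; try apply Z.eq_dec; decide equality; apply Z.eq_dec. Defined.

Definition zrange (m : nat) : list Z :=
  map (fun k => (Z.of_nat k - Z.of_nat m)%Z) (seq 0 (2 * m + 1)).

(* Lambda_m = { lambda in Z^3 : |lambda|^2 = m }, as a duplicate-free list
   (every such lambda has all coordinates in [-m, m]). *)
Definition Lam (m : nat) : list Z3 :=
  filter (fun p : Z3 => let '(a, b, c) := p in Z.eqb (a * a + b * b + c * c) (Z.of_nat m))
    (flat_map (fun a => flat_map (fun b => map (fun c => (a, b, c)) (zrange m))
                                (zrange m)) (zrange m)).

Definition Ncard (m : nat) : nat := length (Lam m).

Definition count_plane (m : nat) (a : R3) (c : R) : nat :=
  length (filter (fun p => if Req_EM_T (dot a (Z3toR3 p)) c then true else false) (Lam m)).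

Definition is_plane_normal (a : R3) : Prop := a <> (0, 0, 0).

Fixpoint kappa_aux (m : nat) (n : nat) : nat :=
  match n with
  | O => O
  | S k => if excluded_middle_informative
                (exists (a : R3) (c : R), is_plane_normal a /\ (S k <= count_plane m a c)%nat)
           then S k else kappa_aux m k
  end.

(* kappa(sqrt m): the maximal number of points of Z^3 in the intersection of
   the sphere of radius sqrt m (centred at 0) with any plane.  Every plane
   contains at most N such points, so the maximum is searched in [0, N]. *)
Definition kappa_sqrt (m : nat) : nat := kappa_aux m (Ncard m).

Definition xi_of (n : R3) : R3 :=
  let '(n1, n2, n3) := n in
  vscale (/ sqrt (n1 * n1 + n2 * n2)) (n2, - n1, 0).
Definition eta_of (n : R3) : R3 :=
  let '(n1, n2, n3) := n in
  vscale (/ sqrt (n1 * n1 + n2 * n2)) (n1 * n3, n2 * n3, - (n1 * n1) - n2 * n2).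

(* |int_0^A int_0^B e^{2 pi i <mu, u xi + v eta>} du dv|^2, written as
   (real part)^2 + (imaginary part)^2 of the (iterated Riemann) integral. *)
Definition phase (mu xi eta : R3) (u v : R) : R :=
  2 * PI * dot mu (vadd (vscale u xi) (vscale v eta)).
Definition int_re (mu xi eta : R3) (A B : R) : R :=
  RInt (fun u => RInt (fun v => cos (phase mu xi eta u v)) 0 B) 0 A.
Definition int_im (mu xi eta : R3) (A B : R) : R :=
  RInt (fun u => RInt (fun v => sin (phase mu xi eta u v)) 0 B) 0 A.
Definition int_abs2 (mu xi eta : R3) (A B : R) : R :=
  (int_re mu xi eta A B) ^ 2 + (int_im mu xi eta A B) ^ 2.

Definition vsubZ (p q : Z3) : R3 :=
  let '(a, b, c) := p in let '(a', b', c') := q in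
  (IZR (a - a'), IZR (b - b'), IZR (c - c')).

Definition Gsum (m : nat) (n : R3) (A B : R) : R :=
  fold_right Rplus 0
    (map (fun pq : Z3 * Z3 =>
            if Z3_eq_dec (fst pq) (snd pq) then 0
            else int_abs2 (vsubZ (fst pq) (snd pq)) (xi_of n) (eta_of n) A B)
         (list_prod (Lam m) (Lam m))).

Definition admissible (m : nat) : Prop :=
  (0 < m)%nat /\ (m mod 8 <> 0)%nat /\ (m mod 8 <> 4)%nat /\ (m mod 8 <> 7)%nat.

Definition rational_unit_normal (n : R3) : Prop :=
  let '(n1, n2, n3) := n in
  n1 * n1 + n2 * n2 + n3 * n3 = 1 /\ n1 <> 0 /\
  (exists q2 q3 : Q, n2 / n1 = Q2R q2 /\ n3 / n1 = Q2R q3).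

(* The double integral factors into two one-dimensional oscillatory integrals, and
   |int_0^X e^(2 pi i a u) du|^2 <= min (2 X^2, 1 / a^2), so each term of G is
   O(1 / (1 + <lambda - lambda', xi>^2)).  For a rational plane, xi is a real multiple c
   of the integer vector (P, -Q, 0), hence <lambda - lambda', xi> = c (J lambda' - J lambda)
   for the integer-valued linear form J.  Fixing lambda and grouping the lambda' by the
   value z of J, each plane {J = z} holds at most kappa(sqrt m) points of Lambda_m, while
   sum_z 1 / (1 + c^2 (z - J lambda)^2) is bounded independently of m.  Summing over
   lambda gives G << N kappa(sqrt m). *)

From Stdlib Require Import Reals Lra Lia ZArith QArith List ClassicalEpsilon.
From Coquelicot Require Import Coquelicot.
Open Scope R_scope.

Definition sumR {X : Type} (f : X -> R) (l : list X) : R := fold_right Rplus 0 (map f l).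

Lemma sumR_nil {X : Type} (f : X -> R) : sumR f nil = 0.
Proof. reflexivity. Qed.

Lemma sumR_cons {X : Type} (f : X -> R) x l : sumR f (x :: l) = f x + sumR f l.
Proof. reflexivity. Qed.

Lemma sumR_app {X : Type} (f : X -> R) l1 l2 : sumR f (l1 ++ l2) = sumR f l1 + sumR f l2.
Proof.
  induction l1 as [|x l1 IH]; cbn [app]; [rewrite sumR_nil; ring|].
  rewrite !sumR_cons, IH; ring.
Qed.

Lemma sumR_ext {X : Type} (f g : X -> R) l : (forall x, f x = g x) -> sumR f l = sumR g l.
Proof. intros H; unfold sumR; f_equal; apply map_ext, H. Qed.

Lemma sumR_le {X : Type} (f g : X -> R) l :
  (forall x, In x l -> f x <= g x) -> sumR f l <= sumR g l.
Proof.
  induction l as [|x l IH]; intros H; [rewrite !sumR_nil; lra|].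
  rewrite !sumR_cons; apply Rplus_le_compat.
  - apply H; left; reflexivity.
  - apply IH; intros; apply H; right; assumption.
Qed.

Lemma sumR_nonneg {X : Type} (f : X -> R) l : (forall x, 0 <= f x) -> 0 <= sumR f l.
Proof.
  intros H; induction l as [|x l IH]; [rewrite sumR_nil; lra|].
  rewrite sumR_cons; specialize (H x); lra.
Qed.

Lemma In_le_sumR {X : Type} (f : X -> R) l x :
  (forall y, 0 <= f y) -> In x l -> f x <= sumR f l.
Proof.
  intros H; induction l as [|y l IH]; intros Hx; [destruct Hx|].
  rewrite sumR_cons; destruct Hx as [->|Hx].
  - pose proof (sumR_nonneg f l H); lra.
  - specialize (IH Hx); specialize (H y); lra.
Qed.

Lemma sumR_plus {X : Type} (f g : X -> R) l :
  sumR (fun x => f x + g x) l = sumR f l + sumR g l.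
Proof.
  induction l as [|x l IH]; [rewrite !sumR_nil; ring|].
  rewrite !sumR_cons, IH; ring.
Qed.

Lemma sumR_scal {X : Type} (f : X -> R) k l : sumR (fun x => k * f x) l = k * sumR f l.
Proof.
  induction l as [|x l IH]; [rewrite !sumR_nil; ring|].
  rewrite !sumR_cons, IH; ring.
Qed.

Lemma sumR_const {X : Type} (k : R) (l : list X) : sumR (fun _ => k) l = INR (length l) * k.
Proof.
  induction l as [|x l IH]; [rewrite sumR_nil; simpl; ring|].
  rewrite sumR_cons, IH; cbn [length]; rewrite S_INR; ring.
Qed.

Lemma sumR_map {X Y : Type} (f : Y -> R) (h : X -> Y) l :
  sumR f (map h l) = sumR (fun x => f (h x)) l.
Proof. unfold sumR; rewrite map_map; reflexivity. Qed.

Lemma sumR_comm {X Y : Type} (F : X -> Y -> R) l1 l2 :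
  sumR (fun x => sumR (F x) l2) l1 = sumR (fun y => sumR (fun x => F x y) l1) l2.
Proof.
  induction l1 as [|x l1 IH].
  - rewrite sumR_nil, (sumR_ext _ (fun _ => 0)) by reflexivity.
    rewrite sumR_const; ring.
  - rewrite sumR_cons, IH, <- sumR_plus; reflexivity.
Qed.

Lemma sumR_list_prod {X Y : Type} (F : X * Y -> R) l1 l2 :
  sumR F (list_prod l1 l2) = sumR (fun x => sumR (fun y => F (x, y)) l2) l1.
Proof.
  induction l1 as [|x l1 IH]; [reflexivity|].
  cbn [list_prod]; rewrite sumR_app, sumR_map, IH; reflexivity.
Qed.

Definition cos_int (X a : R) : R := RInt (fun u => cos (2 * PI * u * a)) 0 X.
Definition sin_int (X a : R) : R := RInt (fun u => sin (2 * PI * u * a)) 0 X.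
Definition osc_abs2 (X a : R) : R := cos_int X a ^ 2 + sin_int X a ^ 2.

Lemma ex_RInt_cos_phase a X : ex_RInt (fun u => cos (2 * PI * u * a)) 0 X.
Proof.
  apply (@ex_RInt_continuous R_CompleteNormedModule); intros z _.
  apply (@ex_derive_continuous R_AbsRing R_NormedModule); auto_derive; auto.
Qed.

Lemma ex_RInt_sin_phase a X : ex_RInt (fun u => sin (2 * PI * u * a)) 0 X.
Proof.
  apply (@ex_RInt_continuous R_CompleteNormedModule); intros z _.
  apply (@ex_derive_continuous R_AbsRing R_NormedModule); auto_derive; auto.
Qed.

Lemma RInt_lin_comb (f g : R -> R) k1 k2 a b :
  ex_RInt f a b -> ex_RInt g a b ->
  RInt (fun u => k1 * f u + k2 * g u) a b = k1 * RInt f a b + k2 * RInt g a b.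
Proof.
  intros Hf Hg.
  assert (E := RInt_plus (fun u => scal k1 (f u)) (fun u => scal k2 (g u)) a b
                 (ex_RInt_scal (V := R_CompleteNormedModule) _ _ _ k1 Hf)
                 (ex_RInt_scal (V := R_CompleteNormedModule) _ _ _ k2 Hg)).
  rewrite (RInt_scal (V := R_CompleteNormedModule) _ _ _ _ Hf),
          (RInt_scal (V := R_CompleteNormedModule) _ _ _ _ Hg) in E.
  exact E.
Qed.

Lemma phase_split mu xi eta u v :
  phase mu xi eta u v = 2 * PI * u * dot mu xi + 2 * PI * v * dot mu eta.
Proof.
  destruct mu as [[m1 m2] m3], xi as [[x1 x2] x3], eta as [[e1 e2] e3].
  unfold phase, dot, vadd, vscale; ring.
Qed.

Lemma RInt_cos_shift k b B :
  RInt (fun v => cos (k + 2 * PI * v * b)) 0 B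
  = cos_int B b * cos k + (- sin_int B b) * sin k.
Proof.
  rewrite (RInt_ext _ (fun v => cos k * cos (2 * PI * v * b)
                                + (- sin k) * sin (2 * PI * v * b)))
    by (intros v _; rewrite cos_plus; simpl; ring).
  rewrite RInt_lin_comb; [| apply ex_RInt_cos_phase | apply ex_RInt_sin_phase].
  simpl; unfold cos_int, sin_int; ring.
Qed.

Lemma RInt_sin_shift k b B :
  RInt (fun v => sin (k + 2 * PI * v * b)) 0 B
  = sin_int B b * cos k + cos_int B b * sin k.
Proof.
  rewrite (RInt_ext _ (fun v => sin k * cos (2 * PI * v * b)
                                + cos k * sin (2 * PI * v * b)))
    by (intros v _; rewrite sin_plus; simpl; ring).
  rewrite RInt_lin_comb; [| apply ex_RInt_cos_phase | apply ex_RInt_sin_phase].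
  simpl; unfold cos_int, sin_int; ring.
Qed.

Lemma int_abs2_factor mu xi eta A B :
  int_abs2 mu xi eta A B = osc_abs2 A (dot mu xi) * osc_abs2 B (dot mu eta).
Proof.
  set (a := dot mu xi); set (b := dot mu eta).
  assert (Hre : int_re mu xi eta A B
                = cos_int B b * cos_int A a + (- sin_int B b) * sin_int A a).
  { unfold int_re.
    rewrite (RInt_ext _ (fun u => cos_int B b * cos (2 * PI * u * a)
                                  + (- sin_int B b) * sin (2 * PI * u * a))).
    - apply RInt_lin_comb; [apply ex_RInt_cos_phase | apply ex_RInt_sin_phase].
    - intros u _; rewrite <- RInt_cos_shift.
      apply RInt_ext; intros v _; now rewrite phase_split. }
  assert (Him : int_im mu xi eta A B
                = sin_int B b * cos_int A a + cos_int B b * sin_int A a).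
  { unfold int_im.
    rewrite (RInt_ext _ (fun u => sin_int B b * cos (2 * PI * u * a)
                                  + cos_int B b * sin (2 * PI * u * a))).
    - apply RInt_lin_comb; [apply ex_RInt_cos_phase | apply ex_RInt_sin_phase].
    - intros u _; rewrite <- RInt_sin_shift.
      apply RInt_ext; intros v _; now rewrite phase_split. }
  unfold int_abs2, osc_abs2; rewrite Hre, Him; ring.
Qed.

Lemma osc_abs2_nonneg X a : 0 <= osc_abs2 X a.
Proof. unfold osc_abs2; nra. Qed.

Lemma osc_abs2_le_sq X a : 0 <= X -> osc_abs2 X a <= 2 * X ^ 2.
Proof.
  intros HX.
  assert (Hc : Rabs (cos_int X a) <= (X - 0) * 1).
  { apply abs_RInt_le_const; [lra | apply ex_RInt_cos_phase |].
    intros; apply Rabs_le, COS_bound. }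
  assert (Hs : Rabs (sin_int X a) <= (X - 0) * 1).
  { apply abs_RInt_le_const; [lra | apply ex_RInt_sin_phase |].
    intros; apply Rabs_le, SIN_bound. }
  unfold osc_abs2; rewrite <- (pow2_abs (cos_int X a)), <- (pow2_abs (sin_int X a)).
  pose proof (Rabs_pos (cos_int X a)); pose proof (Rabs_pos (sin_int X a)); nra.
Qed.

Lemma cos_int_closed X a : a <> 0 -> cos_int X a * (2 * PI * a) = sin (2 * PI * X * a).
Proof.
  intros Ha; pose proof PI_RGT_0.
  unfold cos_int.
  rewrite (is_RInt_unique _ 0 X
             (sin (2 * PI * X * a) / (2 * PI * a) - sin (2 * PI * 0 * a) / (2 * PI * a))).
  - rewrite Rmult_0_r, Rmult_0_l, sin_0; field; lra.
  - apply (is_RInt_derive (fun u => sin (2 * PI * u * a) / (2 * PI * a))).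
    + intros x _; auto_derive; auto; field; lra.
    + intros x _; apply (@ex_derive_continuous R_AbsRing R_NormedModule); auto_derive; auto.
Qed.

Lemma sin_int_closed X a : a <> 0 -> sin_int X a * (2 * PI * a) = 1 - cos (2 * PI * X * a).
Proof.
  intros Ha; pose proof PI_RGT_0.
  unfold sin_int.
  rewrite (is_RInt_unique _ 0 X
             (- cos (2 * PI * X * a) / (2 * PI * a) - - cos (2 * PI * 0 * a) / (2 * PI * a))).
  - rewrite Rmult_0_r, Rmult_0_l, cos_0; field; lra.
  - apply (is_RInt_derive (fun u => - cos (2 * PI * u * a) / (2 * PI * a))).
    + intros x _; auto_derive; auto; field; lra.
    + intros x _; apply (@ex_derive_continuous R_AbsRing R_NormedModule); auto_derive; auto.
Qed.

Lemma osc_abs2_decay X a : osc_abs2 X a * a ^ 2 <= 1.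
Proof.
  destruct (Req_dec a 0) as [->|Ha]; [simpl; lra|].
  pose proof (cos_int_closed X a Ha) as Ec; pose proof (sin_int_closed X a Ha) as Es.
  pose proof (SIN_bound (2 * PI * X * a)); pose proof (COS_bound (2 * PI * X * a)).
  assert (HPI : 3 < PI) by (pose proof PI2_3_2; lra).
  unfold osc_abs2.
  set (p := cos_int X a) in *; set (q := sin_int X a) in *.
  assert ((p * (2 * PI * a)) ^ 2 <= 1) by (rewrite Ec; nra).
  assert ((q * (2 * PI * a)) ^ 2 <= 4) by (rewrite Es; nra).
  assert ((p ^ 2 + q ^ 2) * a ^ 2 * (4 * PI ^ 2) <= 5) by nra.
  assert (0 <= (p ^ 2 + q ^ 2) * a ^ 2) by (apply Rmult_le_pos; nra).
  nra.
Qed.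

Lemma osc_abs2_weighted_le X a : 0 <= X -> osc_abs2 X a * (1 + a ^ 2) <= 2 * X ^ 2 + 1.
Proof.
  intros HX; pose proof (osc_abs2_le_sq X a HX); pose proof (osc_abs2_decay X a); nra.
Qed.

Lemma int_abs2_weighted_le mu xi eta A B : 0 <= A -> 0 <= B ->
  int_abs2 mu xi eta A B * (1 + dot mu xi ^ 2) <= 2 * B ^ 2 * (2 * A ^ 2 + 1).
Proof.
  intros HA HB; rewrite int_abs2_factor.
  pose proof (osc_abs2_weighted_le A (dot mu xi) HA).
  pose proof (osc_abs2_le_sq B (dot mu eta) HB).
  pose proof (osc_abs2_nonneg A (dot mu xi)); pose proof (osc_abs2_nonneg B (dot mu eta)).
  pose proof (pow2_ge_0 (dot mu xi)).
  nra.
Qed.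

Definition weight (c : R) (z : Z) : R := / (1 + c ^ 2 * IZR z ^ 2).

Lemma weight_pos c z : 0 < weight c z.
Proof.
  unfold weight; apply Rinv_0_lt_compat.
  pose proof (pow2_ge_0 c); pose proof (pow2_ge_0 (IZR z)); nra.
Qed.

Lemma int_abs2_le_weight mu xi eta A B c k : 0 <= A -> 0 <= B ->
  dot mu xi = c * IZR k ->
  int_abs2 mu xi eta A B <= 2 * B ^ 2 * (2 * A ^ 2 + 1) * weight c k.
Proof.
  intros HA HB Hk.
  pose proof (int_abs2_weighted_le mu xi eta A B HA HB) as H.
  rewrite Hk, Rpow_mult_distr in H.
  unfold weight; set (w := 1 + c ^ 2 * IZR k ^ 2) in *.
  assert (Hw : 0 < w) by (unfold w; pose proof (pow2_ge_0 c); pose proof (pow2_ge_0 (IZR k)); nra).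
  apply Rmult_le_reg_r with w; [exact Hw|].
  rewrite Rmult_assoc, Rinv_l, Rmult_1_r; lra.
Qed.

(* [weight c z <= c^-2 / (z^2 - 1/4) = c^-2 (1/(z - 1/2) - 1/(z + 1/2))] for [z <> 0];
   [potential] is the corresponding antidifference, with a unit jump from 0 to 1
   absorbing [weight c 0 = 1]. *)
Definition potential (z : Z) : R :=
  if Z.leb z 0 then / (1 / 2 - IZR z) else 5 - / (IZR z - 1 / 2).

Lemma potential_bounds z : 0 < potential z <= 5.
Proof.
  unfold potential; destruct (Z.leb_spec z 0) as [H|H].
  - apply IZR_le in H; split; [apply Rinv_0_lt_compat; lra|].
    rewrite <- (Rinv_inv 5); apply Rinv_le_contravar; lra.
  - assert (1 <= IZR z) by (apply IZR_le; lia).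
    assert (0 < / (IZR z - 1 / 2)) by (apply Rinv_0_lt_compat; lra).
    assert (/ (IZR z - 1 / 2) <= 2) by (rewrite <- (Rinv_inv 2); apply Rinv_le_contravar; lra).
    lra.
Qed.

Lemma weight_le_inv_sq c t : c <> 0 -> 1 <= t ^ 2 ->
  / (1 + c ^ 2 * t ^ 2) <= / c ^ 2 * / (t ^ 2 - / 4).
Proof.
  intros Hc Ht; assert (0 < c ^ 2) by (apply pow2_gt_0; exact Hc).
  rewrite <- Rinv_mult; apply Rinv_le_contravar; [apply Rmult_lt_0_compat|]; nra.
Qed.

Lemma weight_le_potential_step c z : c <> 0 ->
  weight c z <= (1 + / c ^ 2) * (potential (z + 1) - potential z).
Proof.
  intros Hc; assert (0 < / c ^ 2) by (apply Rinv_0_lt_compat, pow2_gt_0; exact Hc).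
  unfold weight, potential; rewrite plus_IZR.
  destruct (Z.leb_spec (z + 1) 0) as [H1|H1]; destruct (Z.leb_spec z 0) as [H0|H0]; try lia.
  - assert (IZR z <= -1) by (apply IZR_le; lia).
    replace (/ (1 / 2 - (IZR z + 1)) - / (1 / 2 - IZR z)) with (/ (IZR z ^ 2 - / 4))
      by (field; repeat split; nra).
    assert (0 < / (IZR z ^ 2 - / 4)) by (apply Rinv_0_lt_compat; nra).
    pose proof (weight_le_inv_sq c (IZR z) Hc ltac:(nra)); nra.
  - replace z with 0%Z by lia; simpl IZR.
    replace (5 - / (0 + 1 - 1 / 2) - / (1 / 2 - 0)) with 1 by field.
    replace (/ (1 + c ^ 2 * 0 ^ 2)) with 1 by field; lra.
  - assert (1 <= IZR z) by (apply IZR_le; lia).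
    replace (5 - / (IZR z + 1 - 1 / 2) - (5 - / (IZR z - 1 / 2))) with (/ (IZR z ^ 2 - / 4))
      by (field; repeat split; nra).
    assert (0 < / (IZR z ^ 2 - / 4)) by (apply Rinv_0_lt_compat; nra).
    pose proof (weight_le_inv_sq c (IZR z) Hc ltac:(nra)); nra.
Qed.

Lemma sum_weight_consecutive c b N : c <> 0 ->
  sumR (fun k => weight c (b + Z.of_nat k)) (seq 0 N) <= 5 * (1 + / c ^ 2).
Proof.
  intros Hc.
  assert (Htel : sumR (fun k => weight c (b + Z.of_nat k)) (seq 0 N)
                 <= (1 + / c ^ 2) * (potential (b + Z.of_nat N) - potential b)).
  { induction N as [|N IH].
    - cbn [seq]; rewrite sumR_nil; replace (b + Z.of_nat 0)%Z with b by lia; lra.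
    - rewrite seq_S, sumR_app, sumR_cons, sumR_nil, Nat.add_0_l.
      pose proof (weight_le_potential_step c (b + Z.of_nat N) Hc).
      replace (b + Z.of_nat (S N))%Z with (b + Z.of_nat N + 1)%Z by lia; lra. }
  pose proof (potential_bounds (b + Z.of_nat N)); pose proof (potential_bounds b).
  assert (0 < / c ^ 2) by (apply Rinv_0_lt_compat, pow2_gt_0; exact Hc).
  nra.
Qed.

Lemma sum_weight_zrange c j M : c <> 0 ->
  sumR (fun z => weight c (z - j)) (zrange M) <= 5 * (1 + / c ^ 2).
Proof.
  intros Hc; unfold zrange; rewrite sumR_map.
  rewrite (sumR_ext _ (fun k => weight c ((- Z.of_nat M - j) + Z.of_nat k)))
    by (intros; f_equal; lia).
  apply sum_weight_consecutive, Hc.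
Qed.

Lemma sumR_plane_indicator m a c K :
  sumR (fun p => if Req_EM_T (dot a (Z3toR3 p)) c then K else 0) (Lam m)
  = K * INR (count_plane m a c).
Proof.
  unfold count_plane; induction (Lam m) as [|p l IH]; [rewrite sumR_nil; simpl; ring|].
  rewrite sumR_cons, IH; cbn [filter].
  destruct Req_EM_T; cbn [length]; rewrite ?S_INR; ring.
Qed.

Lemma kappa_aux_ge m k n : (k <= n)%nat ->
  (exists a c, is_plane_normal a /\ (k <= count_plane m a c)%nat) ->
  (k <= kappa_aux m n)%nat.
Proof.
  intros Hk Hplane; induction n as [|n IH]; cbn; [lia|].
  destruct excluded_middle_informative as [_|Hnone]; [lia|].
  destruct (Nat.eq_dec k (S n)) as [->|Hne]; [contradiction|].
  apply IH; lia.
Qed.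

Lemma count_plane_le_kappa m a c : is_plane_normal a ->
  (count_plane m a c <= kappa_sqrt m)%nat.
Proof. intros Ha; apply kappa_aux_ge; [apply filter_length_le | eauto]. Qed.

Lemma sum_Lam_by_planes m (a : R3) (J : Z3 -> Z) (f : Z -> R) (zs : list Z) :
  is_plane_normal a -> (forall p, dot a (Z3toR3 p) = IZR (J p)) ->
  (forall z, 0 <= f z) -> (forall p, In p (Lam m) -> In (J p) zs) ->
  sumR (fun p => f (J p)) (Lam m) <= INR (kappa_sqrt m) * sumR f zs.
Proof.
  intros Ha HJ Hf Hzs.
  set (ind := fun p z => if Req_EM_T (dot a (Z3toR3 p)) (IZR z) then f z else 0).
  apply Rle_trans with (sumR (fun p => sumR (ind p) zs) (Lam m)).
  { apply sumR_le; intros p Hp.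
    replace (f (J p)) with (ind p (J p)) by (unfold ind; destruct Req_EM_T; congruence).
    apply In_le_sumR; [|exact (Hzs p Hp)].
    intros z; unfold ind; destruct Req_EM_T; [apply Hf | lra]. }
  rewrite sumR_comm, <- sumR_scal; apply sumR_le; intros z _.
  unfold ind; rewrite sumR_plane_indicator, Rmult_comm.
  apply Rmult_le_compat_r; [apply Hf | apply le_INR, count_plane_le_kappa, Ha].
Qed.

Definition plane_index (P Q : Z) (p : Z3) : Z := let '(x, y, _) := p in (x * P - y * Q)%Z.

Lemma dot_plane_index P Q p :
  dot (IZR P, - IZR Q, 0) (Z3toR3 p) = IZR (plane_index P Q p).
Proof. destruct p as [[x y] z]; cbn; rewrite minus_IZR, !mult_IZR; ring. Qed.

Lemma in_zrange M z : (- Z.of_nat M <= z <= Z.of_nat M)%Z -> In z (zrange M).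
Proof.
  intros Hz; unfold zrange; apply in_map_iff; exists (Z.to_nat (z + Z.of_nat M)).
  split; [rewrite Z2Nat.id; lia | apply in_seq; lia].
Qed.

Lemma Lam_coord_bound m x y z : In (x, y, z) (Lam m) ->
  (Z.abs x <= Z.of_nat m /\ Z.abs y <= Z.of_nat m)%Z.
Proof. unfold Lam; intros H; apply filter_In in H as [_ H]; apply Z.eqb_eq in H; split; nia. Qed.

Lemma plane_index_in_zrange P Q m p : In p (Lam m) ->
  In (plane_index P Q p) (zrange (Z.to_nat ((Z.abs P + Z.abs Q) * Z.of_nat m))).
Proof.
  destruct p as [[x y] z]; intros Hp; apply Lam_coord_bound in Hp as [Hx Hy].
  apply in_zrange; rewrite Z2Nat.id by lia; cbn.
  assert (Z.abs (x * P) <= Z.of_nat m * Z.abs P)%Z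
    by (rewrite Z.abs_mul; apply Z.mul_le_mono_nonneg_r; lia).
  assert (Z.abs (y * Q) <= Z.of_nat m * Z.abs Q)%Z
    by (rewrite Z.abs_mul; apply Z.mul_le_mono_nonneg_r; lia).
  lia.
Qed.

Lemma rational_normal_xi_index n : rational_unit_normal n ->
  exists (P Q : Z) (c : R), (0 < Q)%Z /\ c <> 0 /\
    forall l l', dot (vsubZ l l') (xi_of n) = c * IZR (plane_index P Q l' - plane_index P Q l).
Proof.
  destruct n as [[n1 n2] n3]; intros (_ & Hn1 & q2 & _ & Hq2 & _).
  exists (Qnum q2), (Z.pos (Qden q2)).
  set (P := Qnum q2); set (Q := Z.pos (Qden q2)).
  assert (HQ : IZR Q <> 0) by (apply not_0_IZR; discriminate).
  assert (Hn2 : n2 = n1 * (IZR P * / IZR Q)).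
  { unfold Q2R in Hq2; fold P Q in Hq2; rewrite <- Hq2; field; exact Hn1. }
  set (s := sqrt (n1 * n1 + n2 * n2)).
  assert (Hs : 0 < s) by (apply sqrt_lt_R0; pose proof (Rlt_0_sqr n1 Hn1); unfold Rsqr in *; nra).
  exists (- n1 / (s * IZR Q)); split; [reflexivity|split].
  - unfold Rdiv; apply Rmult_integral_contrapositive; split; [lra|].
    apply Rinv_neq_0_compat, Rmult_integral_contrapositive; split; lra.
  - intros [[x y] z] [[x' y'] z']; cbn; fold s; rewrite Hn2.
    rewrite !minus_IZR, !mult_IZR; field; split; lra.
Qed.

Lemma plane_index_normal P Q : Q <> 0%Z -> is_plane_normal (IZR P, - IZR Q, 0).
Proof. intros HQ H; injection H as _ HQ0; apply (not_0_IZR Q); [exact HQ | lra]. Qed.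

Lemma Gsum_as_double_sum m n A B :
  Gsum m n A B
  = sumR (fun l => sumR (fun l' =>
      if Z3_eq_dec l l' then 0
      else int_abs2 (vsubZ l l') (xi_of n) (eta_of n) A B) (Lam m)) (Lam m).
Proof. exact (sumR_list_prod _ (Lam m) (Lam m)). Qed.

Section GsumBound.

Variables (n : R3) (A B : R) (P Q : Z) (c : R).
Hypotheses (HA : 0 <= A) (HB : 0 <= B) (HQ : Q <> 0%Z) (Hc : c <> 0).
Hypothesis Hxi : forall l l',
  dot (vsubZ l l') (xi_of n) = c * IZR (plane_index P Q l' - plane_index P Q l).

Let E := 2 * B ^ 2 * (2 * A ^ 2 + 1).
Let D := 5 * (1 + / c ^ 2).

Lemma Gsum_row_le m l :
  sumR (fun l' => if Z3_eq_dec l l' then 0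
                  else int_abs2 (vsubZ l l') (xi_of n) (eta_of n) A B) (Lam m)
  <= E * D * INR (kappa_sqrt m).
Proof.
  set (J := plane_index P Q).
  assert (HE : 0 <= E) by (unfold E; nra).
  apply Rle_trans with (sumR (fun l' => E * weight c (J l' - J l)) (Lam m)).
  { apply sumR_le; intros l' _; destruct Z3_eq_dec.
    - pose proof (weight_pos c (J l' - J l)); nra.
    - apply int_abs2_le_weight; [exact HA | exact HB | apply Hxi]. }
  eapply Rle_trans.
  { apply (sum_Lam_by_planes m (IZR P, - IZR Q, 0) J (fun z => E * weight c (z - J l))).
    - apply plane_index_normal, HQ.
    - apply dot_plane_index.
    - intros z; pose proof (weight_pos c (z - J l)); nra.
    - intros p; apply plane_index_in_zrange. }
  rewrite sumR_scal.
  rewrite (Rmult_comm (E * D)).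
  apply Rmult_le_compat_l; [apply pos_INR|].
  apply Rmult_le_compat_l; [exact HE|].
  apply sum_weight_zrange, Hc.
Qed.

Lemma Gsum_le m : Gsum m n A B <= E * D * INR (Ncard m) * INR (kappa_sqrt m).
Proof.
  rewrite Gsum_as_double_sum.
  apply Rle_trans with (sumR (fun _ => E * D * INR (kappa_sqrt m)) (Lam m)).
  - apply sumR_le; intros l _; apply Gsum_row_le.
  - rewrite sumR_const; unfold Ncard; right; ring.
Qed.

End GsumBound.

Theorem lemma4p3 (n : R3) (A B : R) :
  rational_unit_normal n -> 0 < A -> 0 < B ->
  exists (C : R) (M : nat), 0 < C /\
    forall m : nat, (M <= m)%nat -> admissible m ->
      Gsum m n A B <= C * INR (Ncard m) * INR (kappa_sqrt m).
Proof.
  intros Hn HA HB.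
  destruct (rational_normal_xi_index n Hn) as (P & Q & c & HQ & Hc & Hxi).
  exists (2 * B ^ 2 * (2 * A ^ 2 + 1) * (5 * (1 + / c ^ 2))), 0%nat; split.
  - pose proof (Rinv_0_lt_compat _ (pow2_gt_0 c Hc)).
    apply Rmult_lt_0_compat; nra.
  - intros m _ _.
    apply (Gsum_le n A B P Q c); [lra | lra | lia | exact Hc | exact Hxi].
Qed.
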